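(* In the sleeping multi-armed bandit setting, let $(\ell_t)_{t\ge1}$ be i.i.d. random loss vectors in $[0,1]^K$ with mean vector $\mu$, where for each $t$, $\ell_t$ is independent of everything determined before the learner observes $\ell_t(k_t)$ at round $t$ (including $S_1,\dots,S_t$ and $k_1,\dots,k_t$), and let the availability sets $(S_t)$ be arbitrary with $S_t$ depending only on the past. Let $\sigma^*$ be an ordering with $\mu_{\sigma^*_1}\le\mu_{\sigma^*_2}\le\dots\le\mu_{\sigma^*_K}$. Then for any algorithm and every $k\in[K]$, $$\mathbb E\big[R_T^{\mathrm{ext}}(k)\big]\le\mathbb E\big[R_T^{\mathrm{ordering}}(\sigma^* )\big].$$
   Context: Sleeping multi-armed bandit setting: $K$ arms $[K]$. At each round $t$ a nonempty availability set $S_t\subseteq[K]$ is revealed, the learner (possibly randomized, using only $S_1,\dots,S_t$, previously observed losses and internal randomness) selects $k_t\in S_t$ and observes $\ell_t(k_t)$. External sleeping regret: $R_T^{\mathrm{ext}}(k)=\sum_{t=1}^T\big(\ell_t(k_t)-\ell_t(k)\big)\mathbf 1\{k\in S_t\}$. An ordering is a permutation $\sigma=(\sigma_1,\dots,\sigma_K)$ of $[K]$; for nonempty $S\subseteq[K]$, $\sigma(S)=\sigma_m$ with $m=\min\{i:\sigma_i\in S\}$. Ordering regret: $R_T^{\mathrm{ordering}}(\sigma)=\sum_{t=1}^T\big(\ell_t(k_t)-\ell_t(\sigma(S_t))\big)$. *)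

From HB Require Import structures.
From mathcomp Require Import all_boot all_order all_algebra all_fingroup.
From mathcomp Require Import all_classical all_reals all_analysis.
Set Implicit Arguments. Unset Strict Implicit. Unset Printing Implicit Defensive.
Import Order.TTheory GRing.Theory Num.Theory.
Local Open Scope classical_set_scope.
Local Open Scope ring_scope.

(* Rounds are indexed by t = 0, 1, 2, ...  (round t here = round t+1 of the paper).
   A run of the (possibly randomized) learner against the (possibly randomized)
   availability process, on a probability space (Omega, P), is described by
     ell   t j w : loss of arm j at round t,
     Avail t w   : availability set S_t,
     Pick  t w   : arm k_t chosen by the learner. *)

Definition gen_sigma {d} {Omega : measurableType d} (G : set_system Omega) :
  set_system Omega := smallest (sigma_algebra setT) G.

Definition indep_sys {d} {Omega : measurableType d} {R : realType}
  (P : probability Omega R) (F G : set_system Omega) : Prop :=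
  forall A B, F A -> G B -> P (A `&` B) = (P A * P B)%E.

Definition loss_events {d} {Omega : measurableType d} {R : realType} {K : nat}
  (ell : nat -> 'I_K -> Omega -> R) (t : nat) : set_system Omega :=
  [set E | exists j B, measurable B /\ E = ell t j @^-1` B].

(* events determined before the learner observes ell_t(k_t):
   S_s, k_s for s <= t and ell_s for s < t *)
Definition history_events {d} {Omega : measurableType d} {R : realType} {K : nat}
  (ell : nat -> 'I_K -> Omega -> R) (Avail : nat -> Omega -> {set 'I_K})
  (Pick : nat -> Omega -> 'I_K) (t : nat) : set_system Omega :=
  [set E | (exists s A, (s <= t)%N /\ E = Avail s @^-1` [set A])
        \/ (exists s i, (s <= t)%N /\ E = Pick s @^-1` [set i])
        \/ (exists s j B, (s < t)%N /\ measurable B /\ E = ell s j @^-1` B)].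

(* sigma(S) for an ordering sigma (a permutation of [K]):
   sigma_m with m the least index such that sigma_m \in S
   (x0 is an irrelevant default, used only when S is empty) *)
Definition ordering_choice {K : nat} (sigma : {perm 'I_K}) (S : {set 'I_K})
  (x0 : 'I_K) : 'I_K :=
  let s := [seq sigma i | i <- enum 'I_K] in nth x0 s (find (fun a => a \in S) s).

Definition ext_regret {Omega : Type} {R : realType} {K : nat}
  (ell : nat -> 'I_K -> Omega -> R) (Avail : nat -> Omega -> {set 'I_K})
  (Pick : nat -> Omega -> 'I_K) (T : nat) (k : 'I_K) (w : Omega) : R :=
  \sum_(t < T) (ell t (Pick t w) w - ell t k w) * (k \in Avail t w)%:R.

Definition ordering_regret {Omega : Type} {R : realType} {K : nat}
  (ell : nat -> 'I_K -> Omega -> R) (Avail : nat -> Omega -> {set 'I_K})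
  (Pick : nat -> Omega -> 'I_K) (T : nat) (sigma : {perm 'I_K}) (w : Omega) : R :=
  \sum_(t < T) (ell t (Pick t w) w
                 - ell t (ordering_choice sigma (Avail t w) (Pick t w)) w).

From HB Require Import structures.
From mathcomp Require Import all_boot all_order all_algebra all_fingroup.
From mathcomp Require Import all_classical all_reals all_analysis.
Set Implicit Arguments. Unset Strict Implicit. Unset Printing Implicit Defensive.
Import Order.TTheory GRing.Theory Num.Theory.
Local Open Scope classical_set_scope.
Local Open Scope ring_scope.

(* Condition on the pair (k_t, S_t), which takes finitely many values.  Each
   fibre {k_t = i, S_t = A} is determined before ell_t is observed, so it is
   independent of ell_t and
     E[1{k_t = i, S_t = A} ell_t(j)] = P(k_t = i, S_t = A) mu_j.
   Both regrets are, round by round, linear in ell_t with coefficients depending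
   only on (k_t, S_t); hence both expectations equal
   sum_t sum_(i,A) P(k_t = i, S_t = A) * (the same regret computed on the means).
   On a nonempty fibre i is in A, and sigma*(A) has the smallest
   mean in A, so mu_i - mu_sigma*(A) >= (mu_i - mu_k) 1{k in A}. *)

Lemma ordering_choice_mean_le (R : numDomainType) (K : nat) (mu : 'I_K -> R)
    (sigma : {perm 'I_K}) (A : {set 'I_K}) (x0 j : 'I_K) :
  (forall i1 i2 : 'I_K, (i1 <= i2)%N -> mu (sigma i1) <= mu (sigma i2)) ->
  j \in A -> mu (ordering_choice sigma A x0) <= mu j.
Proof.
move=> sorted_mu jA; rewrite /ordering_choice.
set s := [seq sigma i | i <- enum 'I_K].
have nth_s (i : 'I_K) : nth x0 s i = sigma i.
  by rewrite (nth_map i) ?size_enum_ord // nth_ord_enum.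
have find_le : (find (fun a => a \in A) s <= (sigma^-1)%g j)%N.
  by rewrite leqNgt; apply/negP => /(before_find x0); rewrite nth_s permKV jA.
have find_lt : (find (fun a => a \in A) s < K)%N :=
  leq_ltn_trans find_le (ltn_ord _).
rewrite (nth_s (Ordinal find_lt)).
by have := sorted_mu (Ordinal find_lt) _ find_le; rewrite permKV.
Qed.

Lemma sumr_kroneckerB (R : pzRingType) (I : finType) (x : I -> R) (a b : I) :
  \sum_j ((j == a)%:R - (j == b)%:R) * x j = x a - x b.
Proof.
have sum_delta c : \sum_j (j == c)%:R * x j = x c.
  rewrite (bigD1 c) //= eqxx mul1r big1 ?addr0 // => j /negbTE ->.
  by rewrite mul0r.
by under eq_bigr do rewrite mulrBl; rewrite sumrB !sum_delta.
Qed.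

(* The round-t regrets are [\sum_j coef (k_t, S_t) j * ell_t(j)] for these
   coefficient vectors. *)
Definition ext_coef {R : pzRingType} {K : nat} (k : 'I_K)
    (p : 'I_K * {set 'I_K}) (j : 'I_K) : R :=
  (k \in p.2)%:R * ((j == p.1)%:R - (j == k)%:R).

Definition ordering_coef {R : pzRingType} {K : nat} (sigma : {perm 'I_K})
    (p : 'I_K * {set 'I_K}) (j : 'I_K) : R :=
  (j == p.1)%:R - (j == ordering_choice sigma p.2 p.1)%:R.

Lemma sum_ext_coef (R : pzRingType) (K : nat) (k : 'I_K) p (x : 'I_K -> R) :
  \sum_j ext_coef k p j * x j = (x p.1 - x k) * (k \in p.2)%:R.
Proof.
rewrite -sumr_kroneckerB mulr_natr -mulr_natl mulr_sumr.
by apply: eq_bigr => j _; rewrite mulrA.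
Qed.

Lemma sum_ordering_coef (R : pzRingType) (K : nat) (sigma : {perm 'I_K}) p
    (x : 'I_K -> R) :
  \sum_j ordering_coef sigma p j * x j =
  x p.1 - x (ordering_choice sigma p.2 p.1).
Proof. exact: sumr_kroneckerB. Qed.

Lemma mean_ext_le_mean_ordering (R : numDomainType) (K : nat) (mu : 'I_K -> R)
    (sigma : {perm 'I_K}) (k : 'I_K) (p : 'I_K * {set 'I_K}) :
  (forall i1 i2 : 'I_K, (i1 <= i2)%N -> mu (sigma i1) <= mu (sigma i2)) ->
  p.1 \in p.2 ->
  \sum_j ext_coef k p j * mu j <= \sum_j ordering_coef sigma p j * mu j.
Proof.
move=> sorted_mu iA; rewrite sum_ext_coef sum_ordering_coef.
have [kA|kNA] := boolP (k \in p.2).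
  by rewrite mulr1 lerD2l lerN2 ordering_choice_mean_le.
by rewrite mulr0 subr_ge0 ordering_choice_mean_le.
Qed.

Section real_valued_integral.
Local Open Scope ereal_scope.
Context d (T : measurableType d) (R : realType) (mu : {measure set T -> \bar R}).

Lemma integrableZlEFin (c : R) (h : T -> R) :
  mu.-integrable setT (EFin \o h) ->
  mu.-integrable setT (fun w => (c * h w)%:E).
Proof.
move=> hi; apply: (eq_integrable _ (fun w => c%:E * (h w)%:E)) => //.
exact: integrableZl.
Qed.

Lemma integrable_sumEFin (I : Type) (s : seq I) (h : I -> T -> R) :
  (forall i, mu.-integrable setT (EFin \o h i)) ->
  mu.-integrable setT (fun w => (\sum_(i <- s) h i w)%:E).
Proof.
move=> hi; apply: (eq_integrable _ (fun w => \sum_(i <- s) (h i w)%:E)) => //.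
  by move=> w _; rewrite sumEFin.
by apply: integrable_sum => // i _; exact: hi.
Qed.

Lemma integral_sumEFin (I : Type) (s : seq I) (h : I -> T -> R) :
  (forall i, mu.-integrable setT (EFin \o h i)) ->
  \int[mu]_w (\sum_(i <- s) h i w)%:E = \sum_(i <- s) \int[mu]_w (h i w)%:E.
Proof.
move=> hi; rewrite -integral_sum //.
by apply: eq_integral => w _; rewrite sumEFin.
Qed.

End real_valued_integral.

Section indicator_integrals.
Local Open Scope ereal_scope.
Context d (T : measurableType d) (R : realType) (P : probability T R).

Lemma integrable_indicM (E : set T) (f : T -> R) (M : R) :
  measurable E -> measurable_fun setT f -> (forall w, `|f w| <= M)%R ->
  P.-integrable setT (fun w => (\1_E w * f w)%:E).
Proof.
move=> mE mf f_bnd; apply: measurable_bounded_integrable => //.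
- exact: (le_lt_trans (probability_le1 P measurableT) (ltry 1)).
- by apply: measurable_realfun.measurable_funM => //; exact: measurable_indic.
exists M; split => [|r /ltW M_le_r w _]; first exact: num_real.
apply: le_trans M_le_r; rewrite normrM indicE.
have [_|_] := boolP (w \in E).
- by rewrite normr1 mul1r.
- by rewrite normr0 mul0r (le_trans (normr_ge0 _) (f_bnd w)).
Qed.

Lemma integral_indicM_indep (E : set T) (X : T -> R) :
  measurable E -> measurable_fun setT X -> (forall w, 0 <= X w)%R ->
  (forall B, measurable B -> P (E `&` X @^-1` B) = P E * P (X @^-1` B)) ->
  \int[P]_w (\1_E w * X w)%:E = P E * \int[P]_w (X w)%:E.
Proof.
move=> mE mX X_ge0 indep.
(* Both expectations are integrals of tail probabilities (layer-cake formula),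
   and independence factors each tail probability of 1_E * X. *)
have mY : measurable_fun setT (fun w => \1_E w * X w)%R.
  by apply: measurable_realfun.measurable_funM => //; exact: measurable_indic.
pose Yrv : {RV P >-> R} := HB.pack (fun w => \1_E w * X w)%R
  (isMeasurableFun.Build _ _ _ _ _ mY).
pose Xrv : {RV P >-> R} := HB.pack X (isMeasurableFun.Build _ _ _ _ X mX).
have -> : \int[P]_w (\1_E w * X w)%:E = 'E_P[Yrv] by rewrite expectation_def.
have -> : \int[P]_w (X w)%:E = 'E_P[Xrv] by rewrite expectation_def.
rewrite !ge0_expectation_ccdf; last 2 first.
- exact: X_ge0.
- by move=> w /=; rewrite mulr_ge0 // indicE.
rewrite -ge0_integralZl //; last exact: measurable_funS (ccdf_measurable Xrv).
apply: eq_integral => r; rewrite inE /= in_itv /= andbT => r_ge0.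
rewrite /ccdf /distribution /pushforward /= -indep; last exact: measurable_itv.
congr (P _); apply/seteqP; split => w /=; rewrite !in_itv /= !andbT indicE.
- have [wE|_] := boolP (w \in E); rewrite ?mul1r ?mul0r.
    by move=> ?; split => //; rewrite inE in wE.
  by move=> r_lt; have := lt_le_trans r_lt r_ge0; rewrite ltxx.
- by move=> [wE ?]; rewrite mem_set // mul1r.
Qed.

End indicator_integrals.

Lemma sum_indic_fibres (T : Type) (R : pzRingType) (I : finType) (a : T -> I)
    (F : I -> R) (w : T) :
  F (a w) = \sum_p \1_(a @^-1` [set p]) w * F p.
Proof.
rewrite (bigD1 (a w)) //= indicE mem_set // mul1r big1 ?addr0 //.
move=> p /negbTE pNa.
by rewrite indicE memNset ?mul0r // => /= apw; rewrite apw eqxx in pNa.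
Qed.

Section finite_conditioning.
Local Open Scope ereal_scope.
Context d (T : measurableType d) (R : realType) (P : probability T R).
Variables (I J : finType) (a : T -> I) (X : J -> T -> R) (m : J -> R) (M : R).
Hypothesis a_fibre_measurable : forall p, measurable (a @^-1` [set p]).
Hypothesis X_measurable : forall j, measurable_fun setT (X j).
Hypothesis X_bounded : forall j w, (`|X j w| <= M)%R.
Hypothesis X_fibre_mean : forall p j,
  \int[P]_w (\1_(a @^-1` [set p]) w * X j w)%:E = P (a @^-1` [set p]) * (m j)%:E.

Let fibre_term (g : I -> J -> R) p j w :=
  (g p j * (\1_(a @^-1` [set p]) w * X j w))%R.

Let fibre_expand g w :
  (\sum_j g (a w) j * X j w = \sum_p \sum_j fibre_term g p j w)%R.
Proof.
rewrite (sum_indic_fibres a (fun p => \sum_j g p j * X j w)%R w).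
apply: eq_bigr => p _; rewrite mulr_sumr.
by apply: eq_bigr => j _; rewrite mulrCA.
Qed.

Let fibre_term_integrable g p j : P.-integrable setT (EFin \o fibre_term g p j).
Proof. by apply: integrableZlEFin; exact: integrable_indicM. Qed.

Let fibre_sum_integrable g p :
  P.-integrable setT (fun w => (\sum_j fibre_term g p j w)%:E).
Proof. by apply: integrable_sumEFin => j; exact: fibre_term_integrable. Qed.

Lemma integrable_fibre_sum (g : I -> J -> R) :
  P.-integrable setT (fun w => (\sum_j g (a w) j * X j w)%:E).
Proof.
apply: (eq_integrable _ (fun w => (\sum_p \sum_j fibre_term g p j w)%:E)) => //.
  by move=> w _; rewrite fibre_expand.
by apply: integrable_sumEFin => p; exact: fibre_sum_integrable.
Qed.

Lemma integral_fibre_sum (g : I -> J -> R) :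
  \int[P]_w (\sum_j g (a w) j * X j w)%:E =
  \sum_p P (a @^-1` [set p]) * (\sum_j g p j * m j)%:E.
Proof.
under eq_integral do rewrite fibre_expand.
rewrite integral_sumEFin; last exact: fibre_sum_integrable.
apply: eq_bigr => p _.
rewrite integral_sumEFin; last exact: fibre_term_integrable.
transitivity (\sum_j (g p j)%:E * (P (a @^-1` [set p]) * (m j)%:E)).
  apply: eq_bigr => j _; rewrite -X_fibre_mean -integralZl //.
  exact: integrable_indicM.
rewrite -[P _]fineK ?fin_num_measure //.
under eq_bigr do rewrite -!EFinM.
by rewrite sumEFin -EFinM mulr_sumr; under eq_bigr do rewrite mulrCA.
Qed.

End finite_conditioning.

Lemma gen_sigmaI d (T : measurableType d) (G : set_system T) (A B : set T) :
  gen_sigma G A -> gen_sigma G B -> gen_sigma G (A `&` B).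
Proof.
have [_ _ _ gen_sigma_setI] :=
  (sigma_algebraP (fun X _ => @subsetT _ X)).1 (smallest_sigma_algebra setT G).
exact: gen_sigma_setI.
Qed.

Lemma preimage_pair1 (T U V : Type) (f : T -> U) (g : T -> V) (p : U * V) :
  (fun w => (f w, g w)) @^-1` [set p] = f @^-1` [set p.1] `&` g @^-1` [set p.2].
Proof.
by case: p => u v; apply/seteqP; split => w /= [-> ->].
Qed.

Lemma ext_regretE (Omega : Type) (R : realType) (K : nat)
    (ell : nat -> 'I_K -> Omega -> R) (Avail : nat -> Omega -> {set 'I_K})
    (Pick : nat -> Omega -> 'I_K) (T : nat) (k : 'I_K) (w : Omega) :
  ext_regret ell Avail Pick T k w =
  \sum_(t < T) \sum_j ext_coef k (Pick t w, Avail t w) j * ell t j w.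
Proof. by apply: eq_bigr => t _; rewrite sum_ext_coef. Qed.

Lemma ordering_regretE (Omega : Type) (R : realType) (K : nat)
    (ell : nat -> 'I_K -> Omega -> R) (Avail : nat -> Omega -> {set 'I_K})
    (Pick : nat -> Omega -> 'I_K) (T : nat) (sigma : {perm 'I_K}) (w : Omega) :
  ordering_regret ell Avail Pick T sigma w =
  \sum_(t < T) \sum_j ordering_coef sigma (Pick t w, Avail t w) j * ell t j w.
Proof. by apply: eq_bigr => t _; rewrite sum_ordering_coef. Qed.

Lemma integral_choice_indicM_loss d (Omega : measurableType d) (R : realType)
    (P : probability Omega R) (K : nat) (ell : nat -> 'I_K -> Omega -> R)
    (Avail : nat -> Omega -> {set 'I_K}) (Pick : nat -> Omega -> 'I_K)
    (t : nat) (p : 'I_K * {set 'I_K}) (j : 'I_K) :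
  let E := (fun w => (Pick t w, Avail t w)) @^-1` [set p] in
  indep_sys P (gen_sigma (loss_events ell t))
              (gen_sigma (history_events ell Avail Pick t)) ->
  measurable E -> measurable_fun setT (ell t j) -> (forall w, 0 <= ell t j w) ->
  (\int[P]_w (\1_E w * ell t j w)%:E = P E * \int[P]_w (ell t j w)%:E)%E.
Proof.
move=> E indep mE ell_meas ell_ge0.
apply: integral_indicM_indep => // B mB; rewrite setIC muleC indep //.
  by apply: sub_sigma_algebra; exists j, B.
rewrite /E preimage_pair1; apply: gen_sigmaI; apply: sub_sigma_algebra.
- by right; left; exists t, p.1.
- by left; exists t, p.2.
Qed.

Theorem mainTheorem5 (d : measure_display) (Omega : measurableType d)
  (R : realType) (P : probability Omega R) (K T : nat)
  (ell : nat -> 'I_K -> Omega -> R)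
  (Avail : nat -> Omega -> {set 'I_K}) (Pick : nat -> Omega -> 'I_K)
  (mu : 'I_K -> R) (sigma_star : {perm 'I_K}) (k : 'I_K) :
  (forall t j, measurable_fun setT (ell t j)) ->
  (forall t j w, 0 <= ell t j w <= 1) ->
  (forall t A, measurable (Avail t @^-1` [set A])) ->
  (forall t i, measurable (Pick t @^-1` [set i])) ->
  (forall t w, Avail t w != finset.set0) ->
  (forall t w, Pick t w \in Avail t w) ->
  (forall t (B : 'I_K -> set R), (forall j, measurable (B j)) ->
     P [set w | forall j, B j (ell t j w)] = P [set w | forall j, B j (ell 0%N j w)]) ->
  (forall t, indep_sys P (gen_sigma (loss_events ell t))
                         (gen_sigma (history_events ell Avail Pick t))) ->
  (forall t j, (\int[P]_w (ell t j w)%:E = (mu j)%:E)%E) ->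
  (forall i j : 'I_K, (i <= j)%N -> mu (sigma_star i) <= mu (sigma_star j)) ->
  (\int[P]_w (ext_regret ell Avail Pick T k w)%:E
     <= \int[P]_w (ordering_regret ell Avail Pick T sigma_star w)%:E)%E.
Proof.
move=> ell_meas ell01 Avail_meas Pick_meas _ Pick_Avail _ indep mean sorted_mu.
pose a t w := (Pick t w, Avail t w).
have fibre_meas t p : measurable (a t @^-1` [set p]).
  by rewrite preimage_pair1; exact: measurableI.
have ell_bounded t j w : `|ell t j w| <= 1.
  by have /andP[ell_ge0 ell_le1] := ell01 t j w; rewrite ger0_norm.
have fibre_mean t p j : (\int[P]_w (\1_(a t @^-1` [set p]) w * ell t j w)%:E
                         = P (a t @^-1` [set p]) * (mu j)%:E)%E.
  rewrite -(mean t j) integral_choice_indicM_loss //; first exact: fibre_meas.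
  by move=> w; have /andP[] := ell01 t j w.
under eq_integral do rewrite ext_regretE.
under [X in (_ <= X)%E]eq_integral do rewrite ordering_regretE.
have round_integrable t := integrable_fibre_sum P (fibre_meas t) (ell_meas t)
  (ell_bounded t).
rewrite !integral_sumEFin => [|t|t]; last 2 first.
- exact: round_integrable t (ordering_coef sigma_star).
- exact: round_integrable t (ext_coef k).
apply: lee_sum => t _.
have round_mean := integral_fibre_sum (fibre_meas t) (ell_meas t)
  (ell_bounded t) (fibre_mean t).
rewrite (round_mean (ext_coef k)) (round_mean (ordering_coef sigma_star)).
apply: lee_sum => p _; have [pA|pNA] := boolP (p.1 \in p.2).
  by rewrite lee_wpmul2l ?lee_fin ?mean_ext_le_mean_ordering.
have -> : a t @^-1` [set p] = set0.
  by apply/seteqP; split => // w /= apw; rewrite -apw /= Pick_Avail in pNA.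
by rewrite measure0 !mul0e.
Qed.
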